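(* Let $A_1,A_2,B_1,B_2$ be four yes/no observables (taking values in $\{0,1\}$), and suppose that for each pair $(i,j)\in\{1,2\}^2$ we are given a probability measure $\mu_{ij}$ on the Boolean algebra freely generated by $A_i$ and $B_j$, such that these measures are consistent on common observables: the probability of $A_i=1$ does not depend on $j$, and the probability of $B_j=1$ does not depend on $i$. Write $\langle A_i\rangle$, $\langle B_j\rangle$, $\langle A_iB_j\rangle$ for the corresponding expectations. Then the following are equivalent: (1) there is a classical probability space $(X,\Sigma,\mu)$ and $\{0,1\}$-valued measurable functions $A_1,A_2,B_1,B_2$ on it whose expectations $\langle A_i\rangle,\langle B_j\rangle,\langle A_iB_j\rangle$ (for all $i,j\in\{1,2\}$) coincide with the given ones; (2) there exists a real number $c$ such that for each $k\in\{1,2\}$ there is a classical probability model for the three $\{0,1\}$-valued variables $A_1,A_2,B_k$ reproducing the given values $\langle A_1\rangle,\langle A_2\rangle,\langle B_k\rangle,\langle A_1B_k\rangle,\langle A_2B_k\rangle$ and satisfying $\langle A_1A_2\rangle=c$.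
   Context: A classical probability model (classical representation) for a set of yes/no observables is a probability space $(X,\Sigma,\mu)$ in which each observable is represented by the indicator function of a measurable set; expectations and correlations such as $\langle A_1A_2\rangle$ denote $\mu$-expectations of the products of these indicator functions. In the Bell–Clauser–Horne setting, $A_i$ is compatible (jointly measurable) with $B_j$ for all $i,j$, whereas $A_1,A_2$ are mutually incompatible and $B_1,B_2$ are mutually incompatible; so only $\langle A_i\rangle,\langle B_j\rangle,\langle A_iB_j\rangle$ are given data, while $\langle A_1A_2\rangle$ is an unmeasurable correlation. *)

From HB Require Import structures.
From mathcomp Require Import all_boot all_order all_algebra.
From mathcomp Require Import all_classical all_reals all_analysis.
Set Implicit Arguments. Unset Strict Implicit. Unset Printing Implicit Defensive.
Import Order.TTheory GRing.Theory Num.Theory.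
Local Open Scope ring_scope.
Local Open Scope classical_set_scope.

(* A probability measure on the Boolean algebra freely generated by two
   yes/no observables X, Y is determined by its values on the four atoms
   [X = a /\ Y = b], (a, b) : bool * bool. *)
Definition bool2_prob (R : realType) (p : bool * bool -> R) : Prop :=
  (forall x, 0 <= p x) /\ \sum_(x : bool * bool) p x = 1.

Definition marg1 (R : realType) (p : bool * bool -> R) : R := p (true, true) + p (true, false).
Definition marg2 (R : realType) (p : bool * bool -> R) : R := p (true, true) + p (false, true).
Definition prodE (R : realType) (p : bool * bool -> R) : R := p (true, true).

(* Bell--Clauser--Horne data: mu i j is the joint distribution of (A_i, B_j). *)
Definition BCH_data (R : realType) (mu : 'I_2 -> 'I_2 -> bool * bool -> R) : Prop :=
  (forall i j, bool2_prob (mu i j)) /\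
  (forall i j j', marg1 (mu i j) = marg1 (mu i j')) /\
  (forall i i' j, marg2 (mu i j) = marg2 (mu i' j)).

(* <A_i> (independent of j by consistency), <B_j>, <A_i B_j> *)
Definition expA (R : realType) (mu : 'I_2 -> 'I_2 -> bool * bool -> R) (i : 'I_2) : R :=
  marg1 (mu i ord0).
Definition expB (R : realType) (mu : 'I_2 -> 'I_2 -> bool * bool -> R) (j : 'I_2) : R :=
  marg2 (mu ord0 j).
Definition expAB (R : realType) (mu : 'I_2 -> 'I_2 -> bool * bool -> R) (i j : 'I_2) : R :=
  prodE (mu i j).

(* The expectation of a product of indicators 1_U 1_V is P (U `&` V). *)
Definition classical_BCH (R : realType) (mu : 'I_2 -> 'I_2 -> bool * bool -> R) : Prop :=
  exists (d : measure_display) (T : measurableType d) (P : probability T R)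
         (A B : 'I_2 -> set T),
    (forall i, measurable (A i)) /\ (forall j, measurable (B j)) /\
    (forall i, P (A i) = (expA mu i)%:E) /\
    (forall j, P (B j) = (expB mu j)%:E) /\
    (forall i j, P (A i `&` B j) = (expAB mu i j)%:E).

Definition classical_triple (R : realType) (mu : 'I_2 -> 'I_2 -> bool * bool -> R)
    (k : 'I_2) (c : R) : Prop :=
  exists (d : measure_display) (T : measurableType d) (P : probability T R)
         (A : 'I_2 -> set T) (Bk : set T),
    (forall i, measurable (A i)) /\ measurable Bk /\
    (forall i, P (A i) = (expA mu i)%:E) /\
    P Bk = (expB mu k)%:E /\
    (forall i, P (A i `&` Bk) = (expAB mu i k)%:E) /\
    P (A ord0 `&` A (lift ord0 ord0)) = c%:E.

From HB Require Import structures.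
From mathcomp Require Import all_boot all_order all_algebra.
From mathcomp Require Import all_classical all_reals all_analysis.
From mathcomp Require Import ring lra.
Set Implicit Arguments. Unset Strict Implicit. Unset Printing Implicit Defensive.
Import Order.TTheory GRing.Theory Num.Theory.
Local Open Scope ring_scope.
Local Open Scope classical_set_scope.

(* A classical model of (A_1, A_2, B) is described by the probabilities of its eight
   atoms, and inclusion-exclusion expresses these through <A_1>, <A_2>, <B>, <A_1 B>,
   <A_2 B>, c = <A_1 A_2> and one free parameter t = <A_1 A_2 B>.  In particular the
   joint law of (A_1, A_2) only depends on <A_1>, <A_2> and c, so the two models of (2)
   agree on it, and making B_1 and B_2 conditionally independent given (A_1, A_2) glues
   them into one probability on {0,1}^4 with the prescribed marginals.  Conversely a
   model as in (1) gives (2) with c = P(A_1 A_2). *)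

Lemma in_set_predb T (f : T -> bool) x : (x \in [set y | f y]) = f x.
Proof. by apply/idP/idP; rewrite in_setE. Qed.

Lemma setI_predb T (f g : T -> bool) :
  [set x | f x] `&` [set x | g x] = [set x | f x && g x].
Proof. by apply/seteqP; split=> x /=; [case=> -> -> | case/andP]. Qed.

Lemma I2_cases (i : 'I_2) : i = ord0 \/ i = lift ord0 ord0.
Proof. by case: i => -[|[|//]] i_lt2; [left|right]; apply/val_inj. Qed.

Section real_probability.
Context d (T : measurableType d) (R : realType) (P : probability T R).

Definition prob (U : set T) : R := fine (P U).

Lemma probE U : measurable U -> (prob U)%:E = P U.
Proof. by move=> mU; rewrite /prob fineK // fin_num_measure. Qed.

Lemma prob_ge0 U : measurable U -> 0 <= prob U.
Proof. by move=> mU; rewrite -lee_fin probE. Qed.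

Lemma prob_le1 U : measurable U -> prob U <= 1.
Proof. by move=> mU; rewrite -lee_fin probE // probability_le1. Qed.

Lemma le_prob U V : measurable U -> measurable V -> U `<=` V -> prob U <= prob V.
Proof. by move=> mU mV UV; rewrite -lee_fin !probE // le_measure // inE. Qed.

Lemma probU U V : measurable U -> measurable V ->
  prob (U `|` V) = prob U + prob V - prob (U `&` V).
Proof.
move=> mU mV; apply: EFin_inj.
rewrite EFinB EFinD !probE //; [|exact: measurableI|exact: measurableU].
by rewrite measureUfinl // ltey_eq fin_num_measure.
Qed.

Lemma probU_le U V W : measurable U -> measurable V -> measurable W ->
  U `|` V `<=` W -> prob U + prob V - prob (U `&` V) <= prob W.
Proof. by move=> mU mV mW UVW; rewrite -probU // le_prob //; exact: measurableU. Qed.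

End real_probability.

(* Probability of the atom [A0 = a, A1 = b, B = e] of three events, by
   inclusion-exclusion, when P Ai = xi, P B = y, P (Ai B) = zi, P (A0 A1) = c
   and P (A0 A1 B) = t. *)
Definition atom3 (R : realType) (x0 x1 y z0 z1 c t : R) (a b e : bool) : R :=
  match a, b, e with
  | true, true, true => t
  | true, true, false => c - t
  | true, false, true => z0 - t
  | true, false, false => x0 - c - z0 + t
  | false, true, true => z1 - t
  | false, true, false => x1 - c - z1 + t
  | false, false, true => y - z0 - z1 + t
  | false, false, false => 1 - x0 - x1 - y + c + z0 + z1 - t
  end.

Lemma atom3_events_ge0 d (T : measurableType d) (R : realType) (P : probability T R)
    (A0 A1 B : set T) : measurable A0 -> measurable A1 -> measurable B ->
  forall a b e, 0 <= atom3 (prob P A0) (prob P A1) (prob P B)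
    (prob P (A0 `&` B)) (prob P (A1 `&` B)) (prob P (A0 `&` A1))
    (prob P (A0 `&` A1 `&` B)) a b e.
Proof.
move=> mA0 mA1 mB.
have mA01 := measurableI _ _ mA0 mA1; have mA0B := measurableI _ _ mA0 mB.
have mA1B := measurableI _ _ mA1 mB; have mA01B := measurableI _ _ mA01 mB.
have t_ge0 := prob_ge0 P mA01B.
have t_le_c := le_prob P mA01B mA01 (@subIsetl _ _ _).
have t_le_z0 : prob P (A0 `&` A1 `&` B) <= prob P (A0 `&` B).
  by apply: le_prob => // x [[]].
have t_le_z1 : prob P (A0 `&` A1 `&` B) <= prob P (A1 `&` B).
  by apply: le_prob => // x [[]].
have in_A0 : prob P (A0 `&` A1) + prob P (A0 `&` B) - prob P (A0 `&` A1 `&` B)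
    <= prob P A0.
  by rewrite -setIA setIIr; apply: probU_le => // x [] [].
have in_A1 : prob P (A0 `&` A1) + prob P (A1 `&` B) - prob P (A0 `&` A1 `&` B)
    <= prob P A1.
  have -> : A0 `&` A1 `&` B = (A0 `&` A1) `&` (A1 `&` B).
    by rewrite setIA -(setIA A0 A1 A1) setIid.
  by apply: probU_le => // x [] [].
have in_B : prob P (A0 `&` B) + prob P (A1 `&` B) - prob P (A0 `&` A1 `&` B)
    <= prob P B.
  by rewrite setIIl; apply: probU_le => // x [] [].
have in_T := probU_le P (measurableU _ _ mA0 mA1) mB measurableT (@subsetT _ _).
rewrite setIUl probU ?probU // -setIIl in in_T.
have T_le1 := prob_le1 P measurableT.
by case; case; case => /=; lra.
Qed.

Definition table_prob (R : realType) (q : bool -> bool -> bool -> R)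
    (f : bool -> bool -> bool -> bool) : R :=
  \sum_(a : bool) \sum_(b : bool) \sum_(e : bool) q a b e * (f a b e)%:R.

Lemma atom3_marginal (R : realType) (x0 x1 y z0 z1 c t y' z0' z1' t' : R) a b :
  \sum_(e : bool) atom3 x0 x1 y z0 z1 c t a b e =
  \sum_(e : bool) atom3 x0 x1 y' z0' z1' c t' a b e.
Proof. by rewrite !big_bool; case: a; case: b => /=; ring. Qed.

Lemma atom3_total (R : realType) (x0 x1 y z0 z1 c t : R) :
  table_prob (atom3 x0 x1 y z0 z1 c t) (fun _ _ _ => true) = 1.
Proof. by rewrite /table_prob !big_bool /=; ring. Qed.

Lemma atom3_probs (R : realType) (x0 x1 y z0 z1 c t : R) :
  let q := atom3 x0 x1 y z0 z1 c t in
  [/\ table_prob q (fun a _ _ => a) = x0,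
      table_prob q (fun _ b _ => b) = x1, table_prob q (fun _ _ e => e) = y,
      table_prob q (fun a _ e => a && e) = z0 & table_prob q (fun _ b e => b && e) = z1].
Proof. by rewrite /table_prob !big_bool /=; split; ring. Qed.

Lemma finite_prob d (T : measurableType d) (R : realType) (s : seq T) (w : T -> R) :
  (forall x, 0 <= w x) -> \sum_(x <- s) w x = 1 ->
  exists P : probability T R, forall X, P X = (\sum_(x <- s) w x * (x \in X)%:R)%:E.
Proof.
move=> w_ge0 w_sum1.
have [M ME] : exists M : {measure set T -> \bar R},
    forall X, M X = (\sum_(x <- s) w x * (x \in X)%:R)%:E.
  exists (msum (fun k => mscale (NngNum (w_ge0 (nth point s k))) \d_(nth point s k)) (size s)).
  move=> X; rewrite /msum /= (big_nth point) big_mkord -sumEFin.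
  by apply: eq_bigr => k _; rewrite /= /mscale/= diracE EFinM.
have M1 : M setT = 1%E.
  by rewrite ME; under eq_bigr do rewrite in_setT mulr1; rewrite w_sum1.
exists (mnormalize M \d_point) => X.
(* unfold [mnormalize] hidden under the probability structure *)
rewrite -ME; change (mnormalize M \d_point X = M X).
by rewrite /mnormalize M1 onee_eq0/= invr1 mule1.
Qed.

(* values of (A_1, A_2, B_1, B_2) *)
Definition outcome : Type := (bool * bool * bool * bool)%type.
HB.instance Definition _ := Finite.on outcome.
HB.instance Definition _ := Pointed.on outcome.
HB.instance Definition _ := @isMeasurable.Build default_measure_display outcome
  discrete_measurable discrete_measurable0 discrete_measurableC discrete_measurableU.

Lemma sum_outcome (R : realType) (F : outcome -> R) :
  \sum_(x : outcome) F x =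
  \sum_(a : bool) \sum_(b : bool) \sum_(e0 : bool) \sum_(e1 : bool) F (a, b, e0, e1).
Proof.
rewrite !pair_bigA /=.
by apply: eq_bigr => -[[[a b] e0] e1].
Qed.

Section gluing.
Variables (R : realType) (q0 q1 : bool -> bool -> bool -> R).

(* Conditionally independent coupling given (a, b); where the (a, b)-marginal
   vanishes, division by 0 returns 0, which is the right value there. *)
Definition glue a b e0 e1 : R :=
  q0 a b e0 * q1 a b e1 / \sum_(e : bool) q0 a b e.

Hypotheses (q0_ge0 : forall a b e, 0 <= q0 a b e) (q1_ge0 : forall a b e, 0 <= q1 a b e).
Hypothesis q01_marginal : forall a b, \sum_(e : bool) q0 a b e = \sum_(e : bool) q1 a b e.

Lemma glue_ge0 a b e0 e1 : 0 <= glue a b e0 e1.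
Proof. by rewrite /glue big_bool divr_ge0 ?mulr_ge0 ?addr_ge0. Qed.

Lemma glue_marginal0 a b e0 : \sum_(e1 : bool) glue a b e0 e1 = q0 a b e0.
Proof.
rewrite /glue -big_distrl -big_distrr /= -mulrA -q01_marginal.
have [q_ab0|q_ab_neq0] := eqVneq (\sum_(e : bool) q0 a b e) 0; last by rewrite divff ?mulr1.
suff -> : q0 a b e0 = 0 by rewrite mul0r.
by move: q_ab0 (q0_ge0 a b true) (q0_ge0 a b false); rewrite big_bool; case: e0 => /=; lra.
Qed.

Lemma glue_marginal1 a b e1 : \sum_(e0 : bool) glue a b e0 e1 = q1 a b e1.
Proof.
rewrite /glue -big_distrl -big_distrl /= mulrAC.
have [q_ab0|q_ab_neq0] := eqVneq (\sum_(e : bool) q0 a b e) 0; last by rewrite divff ?mul1r.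
suff -> : q1 a b e1 = 0 by rewrite mulr0.
move: q_ab0 (q1_ge0 a b true) (q1_ge0 a b false); rewrite q01_marginal big_bool.
by case: e1 => /=; lra.
Qed.

Hypothesis q0_total : table_prob q0 (fun _ _ _ => true) = 1.

Lemma glued_prob : exists P : probability outcome R,
  (forall f : bool -> bool -> bool -> bool,
     P [set x | f x.1.1.1 x.1.1.2 x.1.2] = (table_prob q0 f)%:E) /\
  (forall f : bool -> bool -> bool -> bool,
     P [set x | f x.1.1.1 x.1.1.2 x.2] = (table_prob q1 f)%:E).
Proof.
pose w (x : outcome) := glue x.1.1.1 x.1.1.2 x.1.2 x.2.
have sum_w0 (f : bool -> bool -> bool -> bool) :
    \sum_(x : outcome) w x * (f x.1.1.1 x.1.1.2 x.1.2)%:R = table_prob q0 f.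
  rewrite sum_outcome /w; apply: eq_bigr => a _; apply: eq_bigr => b _.
  by apply: eq_bigr => e0 _ /=; rewrite -big_distrl glue_marginal0.
have sum_w1 (f : bool -> bool -> bool -> bool) :
    \sum_(x : outcome) w x * (f x.1.1.1 x.1.1.2 x.2)%:R = table_prob q1 f.
  rewrite sum_outcome /w; apply: eq_bigr => a _; apply: eq_bigr => b _.
  by rewrite exchange_big; apply: eq_bigr => e1 _ /=; rewrite -big_distrl glue_marginal1.
have w_sum1 : \sum_(x : outcome) w x = 1.
  by rewrite -q0_total -sum_w0; under [RHS]eq_bigr do rewrite mulr1.
have [P PE] := finite_prob (s := index_enum outcome) (fun x => glue_ge0 _ _ _ _) w_sum1.
exists P; split => f; rewrite PE; [rewrite -sum_w0 | rewrite -sum_w1]; congr (_%:E);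
  by apply: eq_bigr => x _; rewrite in_set_predb.
Qed.

End gluing.


Definition bch_atoms (R : realType) (mu : 'I_2 -> 'I_2 -> bool * bool -> R) k c t :=
  atom3 (expA mu ord0) (expA mu (lift ord0 ord0)) (expB mu k)
    (expAB mu ord0 k) (expAB mu (lift ord0 ord0) k) c t.

Lemma classical_triple_atoms (R : realType) (mu : 'I_2 -> 'I_2 -> bool * bool -> R) k c :
  classical_triple mu k c -> exists t, forall a b e, 0 <= bch_atoms mu k c t a b e.
Proof.
move=> [d [T [P [A [B [mA [mB [PA [PB [PAB PA01]]]]]]]]]].
exists (prob P (A ord0 `&` A (lift ord0 ord0) `&` B)).
have := atom3_events_ge0 P (mA ord0) (mA (lift ord0 ord0)) mB.
by rewrite /prob !PA PB !PAB PA01.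
Qed.

Lemma classical_BCH_triples (R : realType) (mu : 'I_2 -> 'I_2 -> bool * bool -> R) :
  classical_BCH mu -> exists c : R, forall k : 'I_2, classical_triple mu k c.
Proof.
move=> [d [T [P [A [B [mA [mB [PA [PB PAB]]]]]]]]].
exists (prob P (A ord0 `&` A (lift ord0 ord0))) => k.
exists d, T, P, A, (B k); do 5 (split => //).
by rewrite probE //; apply: measurableI.
Qed.

Lemma glued_classical_BCH (R : realType) (mu : 'I_2 -> 'I_2 -> bool * bool -> R) c t0 t1 :
  (forall a b e, 0 <= bch_atoms mu ord0 c t0 a b e) ->
  (forall a b e, 0 <= bch_atoms mu (lift ord0 ord0) c t1 a b e) ->
  classical_BCH mu.
Proof.
move=> q0_ge0 q1_ge0.
have [P [P0 P1]] := glued_prob q0_ge0 q1_ge0 (atom3_marginal _ _ _ _ _ _ _ _ _ _ _)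
  (atom3_total _ _ _ _ _ _ _).
have probs k t := atom3_probs (expA mu ord0) (expA mu (lift ord0 ord0)) (expB mu k)
  (expAB mu ord0 k) (expAB mu (lift ord0 ord0) k) c t.
have [PA0 PA1 PB0 PA0B0 PA1B0] := probs ord0 t0.
have [_ _ PB1 PA0B1 PA1B1] := probs (lift ord0 ord0) t1.
exists default_measure_display, outcome, P,
  (fun i => [set x : outcome | if i == ord0 then x.1.1.1 else x.1.1.2]),
  (fun j => [set x : outcome | if j == ord0 then x.1.2 else x.2]).
do 2 (split => //); split; [|split].
- move=> i; case: (I2_cases i) => ->.
  + by rewrite (P0 (fun a _ _ => a)) PA0.
  + by rewrite (P0 (fun _ b _ => b)) PA1.
- move=> j; case: (I2_cases j) => ->.
  + by rewrite (P0 (fun _ _ e => e)) PB0.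
  + by rewrite (P1 (fun _ _ e => e)) PB1.
- move=> i j; rewrite setI_predb.
  case: (I2_cases i) => ->; case: (I2_cases j) => -> /=.
  + by rewrite (P0 (fun a _ e => a && e)) PA0B0.
  + by rewrite (P1 (fun a _ e => a && e)) PA0B1.
  + by rewrite (P0 (fun _ b e => b && e)) PA1B0.
  + by rewrite (P1 (fun _ b e => b && e)) PA1B1.
Qed.

Theorem mainTheorem1 (R : realType) (mu : 'I_2 -> 'I_2 -> bool * bool -> R) :
  BCH_data mu ->
  (classical_BCH mu <-> exists c : R, forall k : 'I_2, classical_triple mu k c).
Proof.
move=> _; split; first exact: classical_BCH_triples.
move=> [c triple].
have [t0 q0_ge0] := classical_triple_atoms (triple ord0).
have [t1 q1_ge0] := classical_triple_atoms (triple (lift ord0 ord0)).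
exact: glued_classical_BCH q0_ge0 q1_ge0.
Qed.
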